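(* Let $V>0$, $C_0>0$, $A>0$, $0<\delta<1$ with $\delta\neq\frac14$, and $\epsilon$ with $\frac{4\delta}{3\delta+1}\le\epsilon<1$. Let $R\ge2$, and let $E,y:[R,\infty)\to\mathbb R$ be functions with the following properties: 1. $E-y$ is continuous and piecewise differentiable, with $\frac{d(E-y)}{dr}=\frac{y}{r}$ wherever it is differentiable; 2. $|y(r)|\le C_0r^{-1/3}|E(r)|^{4/3}$ for all $r\ge R$; 3. $|E(r)-RV|\le A(r^\delta+R^\epsilon)$ for all $r\ge R$. Then there is a constant $A''$ depending only on $V,C_0,A,\delta,\epsilon$ such that $$|E(r)-RV|\le A''R^\epsilon\qquad\text{for all } r\ge R.$$
   Context: In the paper this is applied with $R=r_k$, $V=\mathrm{Vol}(Y)$, $E=\hat E$ the energy of the min-max generator, and $y=y_2=(\hat{cs}+2\hat e_\mu)/r$, starting from $\delta=\frac{31}{33}$ and $\epsilon=\frac{62}{63}$. *)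

From Stdlib Require Import Reals Lra List.
Open Scope R_scope.

(* Real power x^a for x >= 0 and a > 0, with the convention 0^a = 0
   (Stdlib's Rpower 0 a = exp (a * ln 0) = 1 is not the intended value). *)
Definition rpow (x a : R) : R :=
  if Rle_dec x 0 then 0 else Rpower x a.

Definition cont_on_halfline (R0 : R) (f : R -> R) : Prop :=
  forall r, R0 <= r ->
    forall eps, 0 < eps -> exists del, 0 < del /\
      forall x, R0 <= x -> Rabs (x - r) < del -> Rabs (f x - f r) < eps.

Definition piecewise_deriv (R0 : R) (f g : R -> R) : Prop :=
  forall b, exists bad : list R,
    forall r, R0 < r < b -> ~ In r bad -> derivable_pt_lim f r (g r).

From Stdlib Require Import Reals Lra List.
Open Scope R_scope.

(* Bootstrapping the exponent.  If |E(r) - RV| <= K (r^a + R^eps) with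
   0 < a <= delta, then |E(s)| = O(R + s^a), so hypothesis 2 gives
   |y(s)| <= c (R^(4/3) s^(-1/3) + s^b) for any b >= (4a-1)/3.  Up to
   r1 = R^(eps/a) the old bound is already O(R^eps); beyond r1 one integrates
   d(E-y)/ds = y/s against the explicit primitive of c (R^(4/3) s^(-4/3) + s^(b-1)),
   and eps >= 4a/(3a+1) is exactly what makes R^(4/3) r1^(-1/3) <= R^eps.  Taking b = a - (1-delta)/3, or
   a - (1-delta)/6 if that vanishes, keeps b <> 0 and lowers the exponent by at least (1-delta)/6;
   once it is negative, r^b <= 1. *)

Lemma nonincreasing_of_derive_nonpos (H h : R -> R) (a b : R) :
  a <= b -> (forall x, a <= x <= b -> continuity_pt H x) ->
  (forall x, a < x < b -> derivable_pt_lim H x (h x)) ->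
  (forall x, a < x < b -> h x <= 0) -> H b <= H a.
Proof.
  intros Hab Hc Hd Hneg.
  destruct (Req_dec a b) as [<-|Hne]; [lra|].
  pose (prH := fun c (P : a < c < b) =>
    exist (fun l => derivable_pt_abs H c l) (h c) (Hd c P)).
  pose (prid := fun c (_ : a < c < b) => derivable_pt_id c).
  destruct (MVT H id a b prH prid ltac:(lra) Hc
              (fun c _ => derivable_continuous_pt _ _ (derivable_pt_id c)))
    as [c [P HP]].
  unfold prH, prid in HP; rewrite derive_pt_id in HP; simpl in HP; unfold id in HP.
  specialize (Hneg c P); nra.
Qed.

Lemma nonincreasing_of_piecewise_derive_nonpos (H h : R -> R) (l : list R) :
  forall a b, a <= b -> (forall x, a <= x <= b -> continuity_pt H x) ->
  (forall x, a < x < b -> ~ In x l -> derivable_pt_lim H x (h x)) ->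
  (forall x, a < x < b -> ~ In x l -> h x <= 0) -> H b <= H a.
Proof.
  induction l as [|c l IH]; intros a b Hab Hc Hd Hneg.
  - apply (nonincreasing_of_derive_nonpos H h); auto.
  - assert (Hsub : forall a' b', a <= a' <= b' -> b' <= b -> ~ (a' < c < b') ->
                   H b' <= H a').
    { intros a' b' Ha' Hb' Hcout.
      apply IH; [lra | intros; apply Hc; lra | |];
        intros x Hx Hn; [apply Hd | apply Hneg]; try lra;
        intros [->|Hin]; tauto. }
    destruct (Rlt_dec a c), (Rlt_dec c b).
    + apply Rle_trans with (H c); apply Hsub; lra.
    + apply Hsub; lra.
    + apply Hsub; lra.
    + apply Hsub; lra.
Qed.

Lemma Rabs_sub_le_of_piecewise_derive (F f G g : R -> R) (l : list R) (a b : R) :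
  a <= b ->
  (forall x, a <= x <= b -> continuity_pt F x) ->
  (forall x, a <= x <= b -> continuity_pt G x) ->
  (forall x, a < x < b -> ~ In x l -> derivable_pt_lim F x (f x)) ->
  (forall x, a < x < b -> derivable_pt_lim G x (g x)) ->
  (forall x, a < x < b -> ~ In x l -> Rabs (f x) <= g x) ->
  Rabs (F b - F a) <= G b - G a.
Proof.
  intros Hab HcF HcG HdF HdG Hfg.
  assert (Hup : F b - G b <= F a - G a).
  { apply (nonincreasing_of_piecewise_derive_nonpos
             (fun s => F s - G s) (fun s => f s - g s) l a b Hab).
    - intros x Hx; apply continuity_pt_minus; auto.
    - intros x Hx Hn; apply (derivable_pt_lim_minus F G); auto.
    - intros x Hx Hn; specialize (Hfg x Hx Hn).
      pose proof (Rle_abs (f x)); pose proof (Rle_abs (- f x)).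
      rewrite Rabs_Ropp in *; lra. }
  assert (Hlow : - F b - G b <= - F a - G a).
  { apply (nonincreasing_of_piecewise_derive_nonpos
             (fun s => - F s - G s) (fun s => - f s - g s) l a b Hab).
    - intros x Hx; apply continuity_pt_minus; [apply continuity_pt_opp|]; auto.
    - intros x Hx Hn; apply (derivable_pt_lim_minus (fun s => - F s) G); auto.
      apply (derivable_pt_lim_opp F); auto.
    - intros x Hx Hn; specialize (Hfg x Hx Hn).
      pose proof (Rle_abs (f x)); pose proof (Rle_abs (- f x)).
      rewrite Rabs_Ropp in *; lra. }
  apply Rabs_le; lra.
Qed.

Lemma continuity_pt_of_cont_on_halfline (R0 x : R) (f : R -> R) :
  cont_on_halfline R0 f -> R0 < x -> continuity_pt f x.
Proof.
  intros Hf Hx eps Heps.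
  destruct (Hf x (Rlt_le _ _ Hx) eps Heps) as [del [Hdel Hd]].
  exists (Rmin del (x - R0)); split; [apply Rmin_glb_lt; lra|].
  intros z [_ Hz]; simpl in *; unfold R_dist in *.
  pose proof (Rmin_l del (x - R0)); pose proof (Rmin_r del (x - R0)).
  apply Hd; [apply Rabs_def2 in Hz|]; lra.
Qed.

Lemma Rpower_pos (x p : R) : 0 < Rpower x p.
Proof. apply exp_pos. Qed.

Lemma Rpower_le_1 (x p : R) : 1 <= x -> p <= 0 -> Rpower x p <= 1.
Proof. intros. rewrite <- (Rpower_O x) by lra. apply Rle_Rpower; lra. Qed.

Lemma Rpower_ge_1 (x p : R) : 1 <= x -> 0 <= p -> 1 <= Rpower x p.
Proof. intros. rewrite <- (Rpower_O x) by lra. apply Rle_Rpower; lra. Qed.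

Lemma Rle_Rpower_l_nonpos (x y p : R) : 0 < x <= y -> p <= 0 -> Rpower y p <= Rpower x p.
Proof.
  intros Hxy Hp. replace p with (- - p) by ring.
  rewrite (Rpower_Ropp y (- p)), (Rpower_Ropp x (- p)).
  apply Rinv_le_contravar; [apply Rpower_pos | apply Rle_Rpower_l; lra].
Qed.

Lemma Rpower_sub_1 (x p : R) : 0 < x -> Rpower x (p - 1) = Rpower x p / x.
Proof.
  intros Hx. unfold Rminus, Rdiv. rewrite Rpower_plus, Rpower_Ropp, Rpower_1 by lra.
  reflexivity.
Qed.

Lemma Rpower_add_le (x y p : R) : 0 < x -> 0 < y -> 0 <= p ->
  Rpower (x + y) p <= Rpower 2 p * (Rpower x p + Rpower y p).
Proof.
  intros Hx Hy Hp.
  pose proof (Rpower_pos x p); pose proof (Rpower_pos y p); pose proof (Rpower_pos 2 p).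
  assert (Hmax : forall z, 0 < z -> x + y <= 2 * z -> Rpower (x + y) p <= Rpower 2 p * Rpower z p).
  { intros z Hz Hle. rewrite Rpower_mult_distr by lra. apply Rle_Rpower_l; lra. }
  destruct (Rle_dec x y);
    [pose proof (Hmax y Hy ltac:(lra)) | pose proof (Hmax x Hx ltac:(lra))]; nra.
Qed.

Lemma Rpower_2_4_3 : Rpower 2 (4/3) <= 4.
Proof.
  replace 4 with (Rpower 2 (INR 2)) at 2 by (rewrite Rpower_pow by lra; simpl; ring).
  apply Rle_Rpower; simpl; lra.
Qed.

Lemma rpow_le_Rpower (x M p : R) : 0 <= x <= M -> 0 < M -> 0 <= p -> rpow x p <= Rpower M p.
Proof.
  intros. unfold rpow; destruct Rle_dec; [left; apply Rpower_pos | apply Rle_Rpower_l; lra].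
Qed.

Section Improvement.

Variables (V C0 K a b eps R0 : R) (E y : R -> R).
Hypotheses (HV : 0 < V) (HC0 : 0 < C0) (HK : 0 < K) (Ha : 0 < a) (Hae : a < eps)
  (Heps1 : eps < 1) (Hcond : 4 * a <= eps * (3 * a + 1)) (Hb : b <> 0)
  (Hab : 4 * a - 1 <= 3 * b) (HR0 : 2 <= R0).
Hypothesis Hcont : cont_on_halfline R0 (fun r => E r - y r).
Hypothesis Hpw : piecewise_deriv R0 (fun r => E r - y r) (fun r => y r / r).
Hypothesis Hy : forall r, R0 <= r ->
  Rabs (y r) <= C0 * Rpower r (-(1/3)) * rpow (Rabs (E r)) (4/3).
Hypothesis Hdev : forall r, R0 <= r ->
  Rabs (E r - R0 * V) <= K * (Rpower r a + Rpower R0 eps).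

Let c1 := 4 * C0 * (Rpower (V + K) (4/3) + Rpower K (4/3)).

Lemma c1_pos : 0 < c1.
Proof.
  unfold c1. pose proof (Rpower_pos (V + K) (4/3)); pose proof (Rpower_pos K (4/3)).
  apply Rmult_lt_0_compat; lra.
Qed.

Lemma Rpower_R0_eps_le : 1 <= Rpower R0 eps <= R0.
Proof.
  split; [apply Rpower_ge_1; lra|].
  rewrite <- (Rpower_1 R0) at 2 by lra. apply Rle_Rpower; lra.
Qed.

Lemma E_abs_le (s : R) : R0 <= s -> Rabs (E s) <= (V + K) * R0 + K * Rpower s a.
Proof.
  intros Hs. pose proof (Hdev s Hs) as Hd. pose proof Rpower_R0_eps_le.
  replace (E s) with ((E s - R0 * V) + R0 * V) by ring.
  eapply Rle_trans; [apply Rabs_triang|]. rewrite (Rabs_pos_eq (R0 * V)) by nra. nra.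
Qed.

Lemma y_abs_le (s : R) : R0 <= s ->
  Rabs (y s) <= c1 * (Rpower R0 (4/3) * Rpower s (-(1/3)) + Rpower s b).
Proof.
  intros Hs.
  set (X := (V + K) * R0); set (Y := K * Rpower s a).
  assert (HX : 0 < X) by (unfold X; nra).
  assert (HY : 0 < Y) by (unfold Y; pose proof (Rpower_pos s a); nra).
  assert (HEp : rpow (Rabs (E s)) (4/3) <= 4 * (Rpower X (4/3) + Rpower Y (4/3))).
  { eapply Rle_trans.
    - apply (rpow_le_Rpower _ (X + Y)); [split; [apply Rabs_pos | apply E_abs_le] | |]; lra.
    - pose proof (Rpower_add_le X Y (4/3) HX HY ltac:(lra)).
      pose proof Rpower_2_4_3. pose proof (Rpower_pos X (4/3)); pose proof (Rpower_pos Y (4/3)).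
      nra. }
  unfold X, Y in HEp.
  rewrite <- !Rpower_mult_distr, Rpower_mult in HEp by (try apply Rpower_pos; lra).
  assert (Hexp : Rpower s (-(1/3)) * Rpower s (a * (4/3)) <= Rpower s b).
  { rewrite <- Rpower_plus. apply Rle_Rpower; lra. }
  pose proof (Hy s Hs).
  pose proof (Rpower_pos (V + K) (4/3)); pose proof (Rpower_pos K (4/3)).
  pose proof (Rpower_pos R0 (4/3)); pose proof (Rpower_pos s (-(1/3))).
  pose proof (Rpower_pos s (a * (4/3))); pose proof (Rpower_pos s b).
  set (S := Rpower s (-(1/3))) in *; set (W := Rpower s (a * (4/3))) in *.
  set (P := Rpower R0 (4/3)) in *; set (A1 := Rpower (V + K) (4/3)) in *.
  set (A2 := Rpower K (4/3)) in *.
  unfold c1; fold A1 A2.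
  assert (Rabs (y s) <= 4 * C0 * (A1 * (P * S) + A2 * (S * W))).
  { eapply Rle_trans; [eassumption|].
    replace (4 * C0 * (A1 * (P * S) + A2 * (S * W))) with (C0 * S * (4 * (A1 * P + A2 * W)))
      by ring.
    apply Rmult_le_compat_l; [nra | lra]. }
  assert (C0 * (A2 * (S * W)) <= C0 * (A2 * Rpower s b))
    by (apply Rmult_le_compat_l; [lra | apply Rmult_le_compat_l; lra]).
  assert (0 <= C0 * (A2 * (P * S) + A1 * Rpower s b))
    by (apply Rmult_le_pos; [lra | apply Rplus_le_le_0_compat; repeat apply Rmult_le_pos; lra]).
  lra.
Qed.

(* Below r1 the assumed bound is already O(R0^eps), since r1^a = R0^eps. *)
Let r1 := Rpower R0 (eps / a).

Lemma R0_lt_r1 : R0 < r1.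
Proof.
  assert (1 < eps / a) by (apply (Rmult_lt_reg_r a); [lra|]; field_simplify; lra).
  unfold r1. rewrite <- (Rpower_1 R0) at 1 by lra. apply Rpower_lt; lra.
Qed.

Lemma Rpower_r1_a : Rpower r1 a = Rpower R0 eps.
Proof. unfold r1. rewrite Rpower_mult. f_equal. field. lra. Qed.

Lemma Rpower_R0_4_3_le (s : R) : r1 <= s ->
  Rpower R0 (4/3) * Rpower s (-(1/3)) <= Rpower R0 eps.
Proof.
  intros Hs. pose proof R0_lt_r1.
  apply Rle_trans with (Rpower R0 (4/3) * Rpower r1 (-(1/3))).
  { apply Rmult_le_compat_l; [left; apply Rpower_pos | apply Rle_Rpower_l_nonpos; lra]. }
  unfold r1. rewrite Rpower_mult, <- Rpower_plus. apply Rle_Rpower; [lra|].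
  apply (Rmult_le_reg_r (3 * a)); [lra|]. field_simplify; lra.
Qed.

Let G (s : R) := c1 * (-3 * Rpower R0 (4/3) * Rpower s (-(1/3)) + / b * Rpower s b).

Lemma G_derive (s : R) : 0 < s ->
  derivable_pt_lim G s (c1 * (Rpower R0 (4/3) * Rpower s (-(1/3)) + Rpower s b) / s).
Proof.
  intros Hs.
  pose proof (derivable_pt_lim_scal _ c1 s _
    (derivable_pt_lim_plus _ _ s _ _
      (derivable_pt_lim_scal _ (-3 * Rpower R0 (4/3)) s _ (derivable_pt_lim_power s (-(1/3)) Hs))
      (derivable_pt_lim_scal _ (/ b) s _ (derivable_pt_lim_power s b Hs)))) as HD.
  rewrite !Rpower_sub_1 in HD by lra.
  replace (c1 * (Rpower R0 (4/3) * Rpower s (-(1/3)) + Rpower s b) / s) with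
    (c1 * (-3 * Rpower R0 (4/3) * (-(1/3) * (Rpower s (-(1/3)) / s))
           + / b * (b * (Rpower s b / s))))
    by (field; lra).
  exact HD.
Qed.

Lemma Rpower_r1_b_le (t : R) : r1 <= t -> Rpower r1 b <= Rpower t b + 1.
Proof.
  intros Ht. pose proof R0_lt_r1. pose proof (Rpower_pos t b).
  destruct (Rle_dec 0 b).
  - pose proof (Rle_Rpower_l r1 t b ltac:(lra) ltac:(lra)); lra.
  - pose proof (Rpower_le_1 r1 b ltac:(lra) ltac:(lra)); lra.
Qed.

Lemma E_minus_y_increment (t : R) : r1 <= t ->
  Rabs ((E t - y t) - (E r1 - y r1)) <= G t - G r1.
Proof.
  intros Ht. pose proof R0_lt_r1.
  destruct (Hpw (t + 1)) as [bad Hbad].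
  apply (Rabs_sub_le_of_piecewise_derive (fun s => E s - y s) (fun s => y s / s) G
    (fun s => c1 * (Rpower R0 (4/3) * Rpower s (-(1/3)) + Rpower s b) / s) bad r1 t);
    [lra | | | | |].
  - intros x Hx. apply (continuity_pt_of_cont_on_halfline R0); [exact Hcont | lra].
  - intros x Hx. apply derivable_continuous_pt. eexists. apply G_derive. lra.
  - intros x Hx Hn. apply Hbad; [lra | exact Hn].
  - intros x Hx. apply G_derive. lra.
  - intros x Hx _. unfold Rdiv. rewrite Rabs_mult, Rabs_inv, (Rabs_pos_eq x) by lra.
    apply Rmult_le_compat_r; [left; apply Rinv_0_lt_compat; lra|].
    apply y_abs_le; lra.
Qed.

Lemma G_increment (t : R) : r1 <= t ->
  G t - G r1 <= 3 * c1 * Rpower R0 eps + c1 / Rabs b * (Rpower t b + Rpower R0 eps).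
Proof.
  intros Ht. pose proof R0_lt_r1. pose proof Rpower_R0_eps_le. pose proof c1_pos.
  assert (Hpow : (Rpower t b - Rpower r1 b) / b <= (Rpower t b + Rpower R0 eps) / Rabs b).
  { eapply Rle_trans; [apply Rle_abs|]. unfold Rdiv.
    rewrite Rabs_mult, Rabs_inv. apply Rmult_le_compat_r.
    - left; apply Rinv_0_lt_compat, Rabs_pos_lt, Hb.
    - pose proof (Rpower_r1_b_le t Ht); pose proof (Rpower_pos t b); pose proof (Rpower_pos r1 b).
      apply Rabs_le; lra. }
  assert (Hfar : Rpower R0 (4/3) * Rpower r1 (-(1/3)) <= Rpower R0 eps)
    by (apply Rpower_R0_4_3_le; lra).
  pose proof (Rpower_pos R0 (4/3)); pose proof (Rpower_pos t (-(1/3))).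
  replace (G t - G r1) with
    (c1 * (3 * (Rpower R0 (4/3) * Rpower r1 (-(1/3)) - Rpower R0 (4/3) * Rpower t (-(1/3)))
           + (Rpower t b - Rpower r1 b) / b)) by (unfold G; field; exact Hb).
  replace (c1 / Rabs b * (Rpower t b + Rpower R0 eps)) with
    (c1 * ((Rpower t b + Rpower R0 eps) / Rabs b))
    by (field; apply Rabs_no_R0, Hb).
  assert (0 <= Rpower R0 (4/3) * Rpower t (-(1/3))) by nra.
  nra.
Qed.

Lemma deviation_improved (t : R) : R0 <= t ->
  Rabs (E t - R0 * V) <= (2 * K + 6 * c1 + c1 / Rabs b) * (Rpower t b + Rpower R0 eps).
Proof.
  intros Ht. pose proof R0_lt_r1. pose proof Rpower_R0_eps_le. pose proof c1_pos.
  pose proof (Rpower_pos t b).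
  assert (Hib : 0 <= c1 / Rabs b)
    by (left; apply Rdiv_lt_0_compat; [lra | apply Rabs_pos_lt, Hb]).
  assert (Hnear : forall s, R0 <= s <= r1 -> Rabs (E s - R0 * V) <= 2 * K * Rpower R0 eps).
  { intros s Hs. pose proof (Hdev s ltac:(lra)).
    pose proof (Rle_Rpower_l s r1 a ltac:(lra) ltac:(lra)). rewrite Rpower_r1_a in *. nra. }
  destruct (Rle_dec t r1) as [Htr|Htr].
  { pose proof (Hnear t ltac:(lra)). nra. }
  pose proof (Hnear r1 ltac:(lra)).
  pose proof (E_minus_y_increment t ltac:(lra)); pose proof (G_increment t ltac:(lra)).
  pose proof (y_abs_le t ltac:(lra)); pose proof (Rpower_R0_4_3_le t ltac:(lra)).
  pose proof (y_abs_le r1 ltac:(lra)); pose proof (Rpower_R0_4_3_le r1 ltac:(lra)).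
  pose proof (Rpower_r1_b_le t ltac:(lra)).
  assert (Rabs (E t - R0 * V) <= Rabs (E r1 - R0 * V) + Rabs (y t) + Rabs (y r1)
                                  + Rabs ((E t - y t) - (E r1 - y r1))).
  { replace (E t - R0 * V) with
      ((E r1 - R0 * V) + (y t + - y r1) + ((E t - y t) - (E r1 - y r1))) by ring.
    pose proof (Rabs_triang ((E r1 - R0 * V) + (y t + - y r1)) ((E t - y t) - (E r1 - y r1))).
    pose proof (Rabs_triang (E r1 - R0 * V) (y t + - y r1)).
    pose proof (Rabs_triang (y t) (- y r1)). rewrite Rabs_Ropp in *. lra. }
  nra.
Qed.

End Improvement.

Definition admissible (V C0 A delta eps R0 : R) (E y : R -> R) : Prop :=
  2 <= R0 /\ cont_on_halfline R0 (fun r => E r - y r) /\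
  piecewise_deriv R0 (fun r => E r - y r) (fun r => y r / r) /\
  (forall r, R0 <= r -> Rabs (y r) <= C0 * Rpower r (-(1/3)) * rpow (Rabs (E r)) (4/3)) /\
  (forall r, R0 <= r -> Rabs (E r - R0 * V) <= A * (Rpower r delta + Rpower R0 eps)).

Definition deviation_bound (V C0 A delta eps a : R) : Prop :=
  exists K, 0 < K /\ forall R0 E y, admissible V C0 A delta eps R0 E y ->
    forall r, R0 <= r -> Rabs (E r - R0 * V) <= K * (Rpower r a + Rpower R0 eps).

Definition sharp_deviation_bound (V C0 A delta eps : R) : Prop :=
  exists A2, forall R0 E y, admissible V C0 A delta eps R0 E y ->
    forall r, R0 <= r -> Rabs (E r - R0 * V) <= A2 * Rpower R0 eps.

Lemma deviation_bound_improve (V C0 A delta eps a b : R) :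
  0 < V -> 0 < C0 -> 0 < a -> a < eps -> eps < 1 -> 4 * a <= eps * (3 * a + 1) ->
  b <> 0 -> 4 * a - 1 <= 3 * b ->
  deviation_bound V C0 A delta eps a -> deviation_bound V C0 A delta eps b.
Proof.
  intros HV HC0 Ha Hae He1 Hcond Hb Hab [K [HK HQ]].
  eexists; split; [|intros R0 E y Hadm; pose proof Hadm as (HR0 & Hc & Hpw & Hy & _);
                    exact (deviation_improved V C0 K a b eps R0 E y HV HC0 HK Ha Hae He1
                             Hcond Hb Hab HR0 Hc Hpw Hy (HQ R0 E y Hadm))].
  pose proof (c1_pos V C0 K HC0).
  assert (0 < 4 * C0 * (Rpower (V + K) (4/3) + Rpower K (4/3)) / Rabs b)
    by (apply Rdiv_lt_0_compat; [lra | apply Rabs_pos_lt, Hb]).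
  lra.
Qed.

Lemma sharp_deviation_bound_of_neg (V C0 A delta eps b : R) : 0 < eps -> b < 0 ->
  deviation_bound V C0 A delta eps b -> sharp_deviation_bound V C0 A delta eps.
Proof.
  intros He Hb [K [HK HQ]]. exists (2 * K). intros R0 E y Hadm r Hr.
  pose proof (HQ R0 E y Hadm r Hr). destruct Hadm as [HR0 _].
  pose proof (Rpower_le_1 r b ltac:(lra) ltac:(lra)).
  pose proof (Rpower_ge_1 R0 eps ltac:(lra) ltac:(lra)). nra.
Qed.

Lemma sharp_deviation_bound_iterate (V C0 A delta eps : R) :
  0 < V -> 0 < C0 -> 0 < delta < 1 -> delta < eps < 1 ->
  4 * delta <= eps * (3 * delta + 1) ->
  forall (n : nat) (a : R), 0 < a <= delta -> a <= INR n * ((1 - delta) / 6) ->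
  deviation_bound V C0 A delta eps a -> sharp_deviation_bound V C0 A delta eps.
Proof.
  intros HV HC0 Hd He Hcond n.
  induction n as [|n IH]; intros a Ha Han Hbound; [simpl in Han; lra|].
  rewrite S_INR in Han.
  assert (Hb : exists b, b <> 0 /\ 4 * a - 1 <= 3 * b /\ b <= a - (1 - delta) / 6).
  { destruct (Req_dec (a - (1 - delta) / 3) 0).
    - exists (a - (1 - delta) / 6); repeat split; lra.
    - exists (a - (1 - delta) / 3); repeat split; lra. }
  destruct Hb as (b & Hb0 & Hab & Hba).
  assert (Hcond_a : 4 * a <= eps * (3 * a + 1)).
  { assert (0 <= (delta - a) * (4 - 3 * eps)) by (apply Rmult_le_pos; lra). lra. }
  apply (deviation_bound_improve V C0 A delta eps a b) in Hbound; try lra.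
  destruct (Rlt_dec b 0).
  - exact (sharp_deviation_bound_of_neg V C0 A delta eps b ltac:(lra) ltac:(lra) Hbound).
  - assert (0 < b) by (destruct (Rtotal_order b 0) as [|[|]]; lra).
    apply (IH b); [lra | lra | exact Hbound].
Qed.

Theorem mainTheorem12 :
  forall (V C0 A delta eps : R),
    0 < V -> 0 < C0 -> 0 < A ->
    0 < delta < 1 -> delta <> 1/4 ->
    4 * delta / (3 * delta + 1) <= eps < 1 ->
    exists A2 : R,
      forall (R0 : R) (E y : R -> R),
        2 <= R0 ->
        cont_on_halfline R0 (fun r => E r - y r) ->
        piecewise_deriv R0 (fun r => E r - y r) (fun r => y r / r) ->
        (forall r l, R0 < r -> derivable_pt_lim (fun s => E s - y s) r l ->
                     l = y r / r) ->
        (forall r, R0 <= r ->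
           Rabs (y r) <= C0 * Rpower r (-(1/3)) * rpow (Rabs (E r)) (4/3)) ->
        (forall r, R0 <= r ->
           Rabs (E r - R0 * V) <= A * (Rpower r delta + Rpower R0 eps)) ->
        forall r, R0 <= r -> Rabs (E r - R0 * V) <= A2 * Rpower R0 eps.
Proof.
  intros V C0 A delta eps HV HC0 HA Hd _ [Heps He1].
  assert (Hcond : 4 * delta <= eps * (3 * delta + 1)).
  { apply (Rmult_le_compat_r (3 * delta + 1)) in Heps; [|lra].
    unfold Rdiv in Heps; rewrite Rmult_assoc, Rinv_l, Rmult_1_r in Heps; lra. }
  destruct (INR_unbounded (delta / ((1 - delta) / 6))) as [n Hn].
  assert (Hdn : delta <= INR n * ((1 - delta) / 6)).
  { apply (Rmult_lt_compat_r ((1 - delta) / 6)) in Hn; [|lra].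
    unfold Rdiv at 1 in Hn; rewrite Rmult_assoc, Rinv_l, Rmult_1_r in Hn; lra. }
  assert (Hstart : deviation_bound V C0 A delta eps delta)
    by (exists A; split; [exact HA | intros R0 E y Hadm; apply Hadm]).
  destruct (sharp_deviation_bound_iterate V C0 A delta eps HV HC0 Hd ltac:(nra) Hcond
              n delta ltac:(lra) Hdn Hstart) as [A2 HA2].
  (* The derivative's value off the exceptional points is already fixed by [piecewise_deriv]. *)
  exists A2. intros R0 E y HR0 Hcont Hpw _ Hy Hdev.
  apply (HA2 R0 E y). repeat split; assumption.
Qed.
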